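(* InqBQ is not entailment-compact relative to id-models: there exist a set of formulas $\Phi$ and a formula $\psi$ such that $\Phi\models_{\mathrm{id}}\psi$ but $\Phi_0\not\models_{\mathrm{id}}\psi$ for every finite $\Phi_0\subseteq\Phi$.
   Context: Inquisitive first-order logic InqBQ. A signature consists of predicate symbols and function symbols, each with an arity; function symbols are either rigid or non-rigid, and function symbols of arity $0$ are constant symbols. Terms are built from variables and function symbols as usual. Formulas are given by $\phi ::= P(t_1,\dots,t_n)\mid (t=t')\mid \bot\mid (\phi\wedge\phi)\mid(\phi\mathbin{\vee\!\!\!\vee}\phi)\mid(\phi\to\phi)\mid\forall x\phi\mid\exists^{\mathsf i}x\phi$, where $\mathbin{\vee\!\!\!\vee}$ is inquisitive disjunction and $\exists^{\mathsf i}$ is the inquisitive existential quantifier. An id-model is a triple $M=(W,D,I)$ with $W$ a non-empty set of worlds, $D$ a non-empty domain, and $I$ assigning to each world $w$ an interpretation $I_w$ giving each $n$-ary predicate $P$ a relation $P_w\subseteq D^n$ and each $n$-ary function symbol $f$ a function $f_w:D^n\to D$ (rigid symbols get the same interpretation at every world); equality is interpreted as identity on $D$ at every world. Term values $[t]^g_w$ are defined as usual. Support of a formula at a state $s\subseteq W$ under an assignment $g$: $M,s\models_g P(t_1,\dots,t_n)$ iff $([t_1]^g_w,\dots,[t_n]^g_w)\in P_w$ for all $w\in s$; $M,s\models_g t=t'$ iff $[t]^g_w=[t']^g_w$ for all $w\in s$; $M,s\models_g\bot$ iff $s=\emptyset$; $\wedge$ is conjunction of support; $M,s\models_g\phi\mathbin{\vee\!\!\!\vee}\psi$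 iff $M,s\models_g\phi$ or $M,s\models_g\psi$; $M,s\models_g\phi\to\psi$ iff for every $t\subseteq s$, $M,t\models_g\phi$ implies $M,t\models_g\psi$; $M,s\models_g\forall x\phi$ iff $M,s\models_{g[x\mapsto d]}\phi$ for all $d\in D$; $M,s\models_g\exists^{\mathsf i}x\phi$ iff $M,s\models_{g[x\mapsto d]}\phi$ for some $d\in D$. id-entailment: $\Phi\models_{\mathrm{id}}\psi$ means that for every id-model $M$, state $s\subseteq W$ and assignment $g$, if $M,s\models_g\phi$ for all $\phi\in\Phi$ then $M,s\models_g\psi$. *)

From mathcomp Require Import all_boot.
From Stdlib Require Import List.

Set Implicit Arguments.
Unset Strict Implicit.
Unset Printing Implicit Defensive.

Record signature := Signature {
  Pred : Type;
  pred_arity : Pred -> nat;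
  Fun : Type;
  fun_arity : Fun -> nat;
  rigid : Fun -> bool
}.

Section Syntax.
Variable S : signature.

Inductive term : Type :=
  | Var : nat -> term
  | App : forall f : Fun S, ('I_(fun_arity f) -> term) -> term.

Inductive form : Type :=
  | Atom : forall P : Pred S, ('I_(pred_arity P) -> term) -> form
  | Eq : term -> term -> form
  | Bot : form
  | And : form -> form -> form
  | IOr : form -> form -> form
  | Imp : form -> form -> form
  | All : nat -> form -> form
  | IEx : nat -> form -> form.

(* id-models: equality is interpreted as identity on D (built into
   the support clause for Eq below). *)
Record idmodel := IdModel {
  World : Type;
  Dom : Type;
  World_ne : inhabited World;
  Dom_ne : inhabited Dom;
  predI : World -> forall P : Pred S, ('I_(pred_arity P) -> Dom) -> Prop;
  funI : World -> forall f : Fun S, ('I_(fun_arity f) -> Dom) -> Dom;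
  funI_rigid : forall f : Fun S, rigid f -> forall w w' : World, @funI w f = @funI w' f
}.

Arguments predI : clear implicits.
Arguments funI : clear implicits.

Variable M : idmodel.

Definition upd (g : nat -> Dom M) (x : nat) (d : Dom M) : nat -> Dom M :=
  fun y => if y == x then d else g y.

Fixpoint tval (w : World M) (g : nat -> Dom M) (t : term) : Dom M :=
  match t with
  | Var x => g x
  | App f a => funI M w f (fun i => tval w g (a i))
  end.

Fixpoint supports (s : World M -> Prop) (g : nat -> Dom M) (phi : form)
  : Prop :=
  match phi with
  | Atom P a => forall w, s w -> predI M w P (fun i => tval w g (a i))
  | Eq t t' => forall w, s w -> tval w g t = tval w g t'
  | Bot => forall w, ~ s w
  | And p q => supports s g p /\ supports s g q
  | IOr p q => supports s g p \/ supports s g q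
  | Imp p q => forall t : World M -> Prop, (forall w, t w -> s w) ->
                 supports t g p -> supports t g q
  | All x p => forall d : Dom M, supports s (upd g x d) p
  | IEx x p => exists d : Dom M, supports s (upd g x d) p
  end.

End Syntax.

Definition id_entails (S : signature) (Phi : form S -> Prop) (psi : form S)
  : Prop :=
  forall (M : idmodel S) (s : World M -> Prop) (g : nat -> Dom M),
    (forall phi, Phi phi -> supports s g phi) -> supports s g psi.

From Pilot Require Import Defs.
From mathcomp Require Import all_boot.
From Stdlib Require Import List Classical FunctionalExtensionality Lia.
From mathcomp Require Import zify.

(* [psi] reads: if [(forall x, lo <= x \/ succ x <= hi) -> exists x, lo <= x <= hi]
   then some pair of values is not taken by the non-rigid constants [(lo, hi)].
   In a model of [Phi] the rigid constant [top] is nonstandard.  Given a state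
   in which [(lo, hi)] takes every pair of values, keep the worlds where [lo]
   is standard and [hi] is not: there a nonstandard [x] lies above [lo] and a
   standard [x] has [succ x] below [hi], yet no [x] lies between [lo] and [hi]
   in every world, since a standard [x] is refuted by the world
   [lo = succ x, hi = top] and a nonstandard [x = succ p] by the world
   [lo = zero, hi = p].  A finite part of [Phi] forbids only finitely many
   numerals as [top], so it holds in the order [0 < ... < K] with
   [succ K = K]; there the inner implication is valid by induction along the
   order, while the full state takes every pair of values. *)

Set Implicit Arguments.
Unset Strict Implicit.
Unset Printing Implicit Defensive.

Arguments upd [S M] g x d _ /.

Section Semantics.
Variables (S : signature) (M : idmodel S).
Implicit Types (w : World M) (g : nat -> Dom M) (t : term S).

Fixpoint ground_term t : Prop :=
  match t with
  | Var _ => False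
  | App _ a => forall i, ground_term (a i)
  end.

Fixpoint rigid_term t : Prop :=
  match t with
  | Var _ => True
  | App f a => rigid f /\ forall i, rigid_term (a i)
  end.

Lemma tval_ground w g g' t : ground_term t -> Defs.tval w g t = Defs.tval w g' t.
Proof.
elim: t => [//|f a IH] /= Ha; congr funI.
by apply: functional_extensionality => i; apply: IH.
Qed.

Lemma tval_rigid w w' g t : rigid_term t -> Defs.tval w g t = Defs.tval w' g t.
Proof.
elim: t => [//|f a IH] /= [rf Ha]; rewrite (funI_rigid rf w w'); congr funI.
by apply: functional_extensionality => i; apply: IH.
Qed.

Definition single w : World M -> Prop := fun x => x = w.

Lemma single_sub (s : World M -> Prop) w : s w -> forall x, single w x -> s x.
Proof. by move=> sw x ->. Qed.

Definition Neg (p : form S) : form S := Imp p (Bot S).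

Lemma supports_Neg_Eq_ne (s : World M -> Prop) w g t t' :
  supports s g (Neg (Eq t t')) -> s w -> Defs.tval w g t <> Defs.tval w g t'.
Proof.
by move=> Hneg sw E; apply: (Hneg (single w) (single_sub sw) _ w erefl) => x ->.
Qed.

Lemma supports_single_Neg_Eq w g t t' :
  Defs.tval w g t <> Defs.tval w g t' -> supports (single w) g (Neg (Eq t t')).
Proof. by move=> Hne u su Htt' x ux; apply: Hne; rewrite -(su x ux); apply: Htt'. Qed.

End Semantics.

Inductive arith_fun := Zero | Succ | Top | Lo | Hi.

Definition arith_arity (f : arith_fun) : nat := if f is Succ then 1 else 0.

Definition arith_rigid (f : arith_fun) : bool :=
  match f with Lo | Hi => false | _ => true end.

Definition sig_arith : signature :=
  @Signature unit (fun _ => 2) arith_fun arith_arity arith_rigid.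

Definition no_args (A : Type) : 'I_0 -> A.
Proof. by case. Defined.

Definition zero : term sig_arith := @App sig_arith Zero (no_args _).
Definition top : term sig_arith := @App sig_arith Top (no_args _).
Definition lo : term sig_arith := @App sig_arith Lo (no_args _).
Definition hi : term sig_arith := @App sig_arith Hi (no_args _).
Definition succ (t : term sig_arith) : term sig_arith := @App sig_arith Succ (fun _ => t).
Definition var (n : nat) : term sig_arith := Var sig_arith n.

Fixpoint numeral (n : nat) : term sig_arith :=
  if n is n'.+1 then succ (numeral n') else zero.

Lemma ground_numeral n : ground_term (numeral n).
Proof. by elim: n => [[]|n IH]. Qed.

Lemma rigid_numeral n : rigid_term (numeral n).
Proof. by elim: n => [|n IH]; split=> // -[]. Qed.

Definition pair_arg (A : Type) (a b : A) : 'I_2 -> A :=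
  fun i => if val i == 0 then a else b.

Definition le (a b : term sig_arith) : form sig_arith :=
  @Atom sig_arith tt (pair_arg a b).

Definition dichotomy : form sig_arith :=
  All 0 (IOr (le lo (var 0)) (le (succ (var 0)) hi)).
Definition between : form sig_arith :=
  IEx 0 (And (le lo (var 0)) (le (var 0) hi)).
Definition unrealized_pair : form sig_arith :=
  IEx 0 (IEx 1 (Neg (And (Eq lo (var 0)) (Eq hi (var 1))))).
Definition psi : form sig_arith := Imp (Imp dichotomy between) unrealized_pair.

Definition ax_zero_least : form sig_arith := All 0 (le zero (var 0)).
Definition ax_succ_least_above : form sig_arith :=
  All 0 (All 1 (Imp (le (var 0) (var 1))
    (Imp (Neg (Eq (var 0) (var 1))) (le (succ (var 0)) (var 1))))).
Definition ax_succ_not_le : form sig_arith :=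
  All 0 (Imp (Neg (Eq (succ (var 0)) (var 0))) (Neg (le (succ (var 0)) (var 0)))).
Definition ax_succ_fixed_top : form sig_arith :=
  All 0 (Imp (Eq (succ (var 0)) (var 0)) (Eq (var 0) top)).
Definition ax_zero_or_succ : form sig_arith :=
  All 0 (IOr (Eq (var 0) zero)
             (IEx 1 (And (Eq (var 0) (succ (var 1))) (Neg (Eq (var 1) (var 0)))))).
Definition ax_top_not_numeral (n : nat) : form sig_arith := Neg (Eq top (numeral n)).

Definition base_axioms : list (form sig_arith) :=
  [:: ax_zero_least; ax_succ_least_above; ax_succ_not_le; ax_succ_fixed_top;
      ax_zero_or_succ].

Definition Phi (p : form sig_arith) : Prop :=
  List.In p base_axioms \/ exists n, p = ax_top_not_numeral n.

Lemma finite_subset_Phi_bounded (Phi0 : list (form sig_arith)) :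
  (forall p, List.In p Phi0 -> Phi p) ->
  exists K, forall p, List.In p Phi0 ->
    List.In p base_axioms \/ exists2 n, n < K & p = ax_top_not_numeral n.
Proof.
elim: Phi0 => [|a l IH] sub; first by exists 0.
have [K HK] := IH (fun p lp => sub p (or_intror lp)).
case: (sub a (or_introl erefl)) => [a_base|[n ->]].
  by exists K => p [<-|lp]; [left | exact: HK].
exists (maxn K n.+1) => p [<-|lp].
  by right; exists n; rewrite // leq_max leqnn orbT.
case: (HK p lp) => [|[m ltmK ->]]; first by left.
by right; exists m; rewrite // leq_max ltmK.
Qed.

Definition le_at (M : idmodel sig_arith) (w : World M) (a b : Dom M) : Prop :=
  @Defs.predI sig_arith M w tt (pair_arg a b).

Lemma supports_le (M : idmodel sig_arith) (t : World M -> Prop) g a b :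
  supports t g (le a b) <-> forall w, t w -> le_at w (Defs.tval w g a) (Defs.tval w g b).
Proof.
have E w : (fun i => Defs.tval w g (pair_arg a b i)) =
    pair_arg (Defs.tval w g a) (Defs.tval w g b).
  by apply: functional_extensionality => i; rewrite /pair_arg; case: ifP.
by rewrite /= /le_at; split=> H w tw; [rewrite -E | rewrite E]; apply: H.
Qed.

Section TruncatedModel.
Variable K : nat.

Definition trunc_succ (x : 'I_K.+1) : 'I_K.+1 := inord (minn x.+1 K).

Lemma trunc_succE x : nat_of_ord (trunc_succ x) = minn x.+1 K.
Proof. by rewrite /trunc_succ inordK // ltnS geq_minr. Qed.

(* Worlds are the pairs of values of [lo] and [hi]. *)
Definition trunc_fun (w : 'I_K.+1 * 'I_K.+1) (f : arith_fun) :
    ('I_(arith_arity f) -> 'I_K.+1) -> 'I_K.+1 :=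
  match f with
  | Zero => fun _ => ord0
  | Succ => fun a => trunc_succ (a ord0)
  | Top => fun _ => ord_max
  | Lo => fun _ => w.1
  | Hi => fun _ => w.2
  end.

Definition trunc_pred (w : 'I_K.+1 * 'I_K.+1) (P : unit) (a : 'I_2 -> 'I_K.+1) : Prop :=
  a ord0 <= a ord_max.

Lemma trunc_fun_rigid (f : arith_fun) : arith_rigid f ->
  forall w w', @trunc_fun w f = @trunc_fun w' f.
Proof. by case: f. Qed.

Definition trunc_model : idmodel sig_arith :=
  @IdModel sig_arith ('I_K.+1 * 'I_K.+1) 'I_K.+1 (inhabits (ord0, ord0))
    (inhabits ord0) trunc_pred trunc_fun trunc_fun_rigid.

Variables (s : World trunc_model -> Prop) (g : nat -> Dom trunc_model).

Lemma trunc_numeralE w n : nat_of_ord (Defs.tval w g (numeral n)) = minn n K.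
Proof. by elim: n => [|n IH] /=; rewrite ?min0n // trunc_succE IH; lia. Qed.

Lemma trunc_base_axioms q : List.In q base_axioms -> supports s g q.
Proof.
case=> [<-|[<-|[<-|[<-|[<-|[]]]]]].
- by [].
- move=> a b u _ Hab u' su' Hne w u'w.
  have {}Hne : a <> b :> nat by move=> /val_inj; apply: supports_Neg_Eq_ne Hne u'w.
  by have := Hab w (su' w u'w); rewrite /= /trunc_pred /= trunc_succE; lia.
- move=> p u _ Hne u' su' Hle w u'w.
  apply: (supports_Neg_Eq_ne Hne (su' w u'w)); apply: val_inj.
  have := Hle w u'w; rewrite /= /trunc_pred /= trunc_succE.
  by have := ltn_ord p; lia.
- move=> p u _ Hfix w uw; have := Hfix w uw => /(congr1 val) /=.
  by rewrite trunc_succE => E; apply: val_inj => /=; have := ltn_ord p; lia.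
- move=> x /=; have [x0|x_gt0] := posnP x; first by left=> w _; apply: val_inj.
  have ltx : x.-1 < K.+1 by have := ltn_ord x; lia.
  right; exists (inord x.-1); split=> [w _ | u _ Hx w uw].
    by apply: val_inj; rewrite /= trunc_succE inordK //; have := ltn_ord x; lia.
  by have := Hx w uw => /(congr1 val) /=; rewrite inordK //; lia.
Qed.

Lemma trunc_top_not_numeral n : n < K -> supports s g (ax_top_not_numeral n).
Proof.
move=> ltnK u _ Htop w uw; have := Htop w uw => /(congr1 (@nat_of_ord K.+1)).
by rewrite trunc_numeralE /=; lia.
Qed.

(* Induction along the order: either some [x <= n] is a uniform witness for
   [between], or [n <= hi] everywhere; at [n = K] the second case makes [K] a
   witness. *)
Lemma trunc_dichotomy_between : supports s g (Imp dichotomy between).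
Proof.
move=> u _ Hdich.
have witness_or_hi_ge n : n <= K ->
    (exists d : 'I_K.+1, forall w, u w -> w.1 <= d <= w.2)
    \/ (forall w, u w -> n <= w.2).
  elim: n => [|n IH] ltnK; first by right.
  case: (IH (ltnW ltnK)) => [|hi_ge]; first by left.
  have nE : nat_of_ord (inord n : 'I_K.+1) = n by rewrite inordK // ltnS ltnW.
  case: (Hdich (inord n)) => /= Hn; [left; exists (inord n) | right] => w uw.
    by have := Hn w uw; rewrite /trunc_pred /= => ->; rewrite nE hi_ge.
  by have := Hn w uw; rewrite /trunc_pred /= trunc_succE nE; lia.
case: (witness_or_hi_ge K (leqnn K)) => [[d Hd]|hi_ge].
  by exists d; split=> w uw; have /andP[] := Hd w uw.
exists ord_max; split=> w uw; rewrite /= /trunc_pred /=; last exact: hi_ge.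
by rewrite -ltnS ltn_ord.
Qed.

End TruncatedModel.

Lemma trunc_full_unrealized K (g : nat -> 'I_K.+1) :
  ~ supports (M := trunc_model K) (fun _ => True) g unrealized_pair.
Proof.
move=> [x [y Hneg]].
apply: (Hneg (single (M := trunc_model K) (x, y)) (fun _ _ => I) _ (x, y) erefl).
by split=> w ->.
Qed.

Lemma not_entails_finite_subset (Phi0 : list (form sig_arith)) :
  (forall p, List.In p Phi0 -> Phi p) ->
  ~ id_entails (fun p => List.In p Phi0) psi.
Proof.
move=> /finite_subset_Phi_bounded [K HK] Hent.
pose g (_ : nat) : 'I_K.+1 := ord0.
apply: (trunc_full_unrealized (g := g)).
apply: (Hent (trunc_model K) _ g _ _ (fun _ _ => I)); last first.
  exact: trunc_dichotomy_between.
move=> p /HK [/trunc_base_axioms | [n ltnK ->]]; first exact.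
exact: trunc_top_not_numeral.
Qed.

Section IdModelsOfPhi.
Variables (M : idmodel sig_arith) (s : World M -> Prop) (g : nat -> Dom M).
Hypothesis s_Phi : forall p, Phi p -> supports s g p.

Lemma supports_base_axiom p : List.In p base_axioms -> supports s g p.
Proof. by move=> bp; apply: s_Phi; left. Qed.

Definition lo_at (w : World M) : Dom M := Defs.tval w g lo.
Definition hi_at (w : World M) : Dom M := Defs.tval w g hi.

Lemma tval_lo w g' : Defs.tval w g' lo = lo_at w.
Proof. by apply: tval_ground => -[]. Qed.

Lemma tval_hi w g' : Defs.tval w g' hi = hi_at w.
Proof. by apply: tval_ground => -[]. Qed.

Lemma realized_pairs (t : World M -> Prop) :
  ~ supports t g unrealized_pair ->
  forall x y, exists2 w, t w & lo_at w = x /\ hi_at w = y.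
Proof.
move=> Hunr x y; apply: NNPP => Hxy; apply: Hunr; exists x, y.
move=> u tu [Hlo Hhi] w uw; apply: Hxy; exists w; first exact: tu.
by split; [rewrite -(tval_lo w (upd (upd g 0 x) 1 y)) Hlo
          | rewrite -(tval_hi w (upd (upd g 0 x) 1 y)) Hhi].
Qed.

Section Standard.
Variable w0 : World M.
Hypothesis s_w0 : s w0.

Definition num (n : nat) : Dom M := Defs.tval w0 g (numeral n).
Definition ntop : Dom M := Defs.tval w0 g top.
Definition nsucc (d : Dom M) : Dom M := @Defs.funI _ M w0 Succ (fun _ => d).
Definition standard (d : Dom M) : Prop := exists n, d = num n.

Lemma tval_numeral w g' n : Defs.tval w g' (numeral n) = num n.
Proof.
rewrite (tval_ground _ g' g); last exact: ground_numeral.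
exact: tval_rigid (rigid_numeral n).
Qed.

Lemma tval_top w g' : Defs.tval w g' top = ntop.
Proof.
rewrite (tval_ground _ g' g); last by case.
by apply: tval_rigid; split=> // -[].
Qed.

Lemma tval_succ w g' t : Defs.tval w g' (succ t) = nsucc (Defs.tval w g' t).
Proof. by rewrite /= (@funI_rigid _ M Succ isT w w0). Qed.

Lemma zero_le w d : s w -> le_at w (num 0) d.
Proof.
move=> sw; have ax : supports s g ax_zero_least by apply: supports_base_axiom; left.
by have /supports_le/(_ w sw) := ax d; rewrite (tval_numeral _ _ 0).
Qed.

Lemma succ_le_of_lt w a b : s w -> le_at w a b -> a <> b -> le_at w (nsucc a) b.
Proof.
move=> sw le_ab ne_ab.
have ax : supports s g ax_succ_least_above.
  by apply: supports_base_axiom; do ![by left | right].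
have le_ab' : supports (single w) (upd (upd g 0 a) 1 b) (le (var 0) (var 1)).
  by apply/supports_le => x ->.
have ne_ab' : supports (single w) (upd (upd g 0 a) 1 b) (Neg (Eq (var 0) (var 1))).
  exact: supports_single_Neg_Eq.
have /supports_le :=
  ax a b (single w) (single_sub sw) le_ab' (single w) (fun x => id) ne_ab'.
by move=> /(_ w erefl); rewrite tval_succ.
Qed.

Lemma not_succ_le w a : s w -> nsucc a <> a -> ~ le_at w (nsucc a) a.
Proof.
move=> sw ne_succ le_succ.
have ax : supports s g ax_succ_not_le.
  by apply: supports_base_axiom; do ![by left | right].
apply: (ax a (single w) (single_sub sw) _ (single w) (fun x => id) _ w erefl).
  by apply: supports_single_Neg_Eq; rewrite tval_succ.
by apply/supports_le => x ->; rewrite tval_succ.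
Qed.

Lemma succ_fixed_top a : nsucc a = a -> a = ntop.
Proof.
move=> fix_a.
have ax : supports s g ax_succ_fixed_top.
  by apply: supports_base_axiom; do ![by left | right].
have := ax a (single w0) (single_sub s_w0) _ w0 erefl.
by rewrite (tval_top w0) /= => -> // x ->; exact: fix_a.
Qed.

Lemma zero_or_succ a : a = num 0 \/ exists2 p, a = nsucc p & p <> a.
Proof.
have ax : supports s g ax_zero_or_succ.
  by apply: supports_base_axiom; do ![by left | right].
case: (ax a) => [Ha | [p [Hp /supports_Neg_Eq_ne/(_ s_w0) ne_pa]]].
  by left; have := Ha w0 s_w0; rewrite (tval_numeral _ _ 0).
right; exists p => //.
by have := Hp w0 s_w0; rewrite tval_succ.
Qed.

Lemma top_nonstandard : ~ standard ntop.
Proof.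
move=> [n top_n].
have ax := s_Phi (or_intror (ex_intro _ n erefl)) (single w0) (single_sub s_w0).
by apply: (ax _ w0 erefl) => x ->; rewrite tval_top tval_numeral.
Qed.

Lemma num_le_nonstandard w n b : s w -> ~ standard b -> le_at w (num n) b.
Proof.
move=> sw b_ns; elim: n => [|n IH]; first exact: zero_le.
by apply: succ_le_of_lt IH _ => // nE; apply: b_ns; exists n.
Qed.

Lemma succ_ne_standard d : standard d -> nsucc d <> d.
Proof.
by move=> [n ->] /succ_fixed_top top_n; apply: top_nonstandard; exists n.
Qed.

Lemma nonstandard_pred d :
  ~ standard d -> exists p, [/\ d = nsucc p, nsucc p <> p & ~ standard p].
Proof.
move=> d_ns; case: (zero_or_succ d) => [d0 | [p dE ne_pd]].
  by case: d_ns; exists 0.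
exists p; split=> // [pE | [n pE]].
  by apply: ne_pd; rewrite dE pE.
by apply: d_ns; exists n.+1; rewrite dE pE.
Qed.

Definition std_nonstd (t : World M -> Prop) (w : World M) : Prop :=
  [/\ t w, standard (lo_at w) & ~ standard (hi_at w)].

Lemma dichotomy_std_nonstd (t : World M -> Prop) :
  (forall w, t w -> s w) -> supports (std_nonstd t) g dichotomy.
Proof.
move=> ts d; case: (classic (standard d)) => [[n ->] | d_ns].
  right; apply/supports_le => w [tw _ hi_ns].
  rewrite tval_succ tval_hi.
  exact: (num_le_nonstandard n.+1 (ts w tw) hi_ns).
left; apply/supports_le => w [tw [m lo_m] _].
by rewrite tval_lo lo_m; apply: num_le_nonstandard (ts w tw) d_ns.
Qed.

Lemma not_between_std_nonstd (t : World M -> Prop) :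
  (forall w, t w -> s w) ->
  (forall x y, exists2 w, t w & lo_at w = x /\ hi_at w = y) ->
  ~ supports (std_nonstd t) g between.
Proof.
move=> ts realized [d [/supports_le lo_le_d /supports_le d_le_hi]].
case: (classic (standard d)) => [d_std | d_ns].
  have [w tw [lo_w hi_w]] := realized (nsucc d) ntop.
  have tw' : std_nonstd t w.
    split=> //; last by rewrite hi_w; apply: top_nonstandard.
    by rewrite lo_w; case: d_std => n ->; exists n.+1.
  apply: (not_succ_le (ts w tw) (succ_ne_standard d_std)).
  by have := lo_le_d w tw'; rewrite tval_lo lo_w.
have [p [dE ne_p p_ns]] := nonstandard_pred d_ns.
have [w tw [lo_w hi_w]] := realized (num 0) p.
have tw' : std_nonstd t w by split=> //; [rewrite lo_w; exists 0 | rewrite hi_w].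
apply: (not_succ_le (ts w tw) ne_p).
by have := d_le_hi w tw'; rewrite tval_hi hi_w -dE.
Qed.

End Standard.

Lemma supports_psi : supports s g psi.
Proof.
move=> t ts Himp; apply: NNPP => /realized_pairs realized.
have [d0] := Dom_ne M.
have [w0 tw0 _] := realized d0 d0.
apply: (not_between_std_nonstd (ts w0 tw0) ts realized).
apply: Himp; first by move=> w [].
exact: dichotomy_std_nonstd.
Qed.

End IdModelsOfPhi.

Lemma Phi_entails_psi : id_entails Phi psi.
Proof. by move=> M s g; apply: supports_psi. Qed.

Theorem mainTheorem4 :
  exists (S : signature) (Phi : form S -> Prop) (psi : form S),
    id_entails Phi psi /\
    forall Phi0 : list (form S),
      (forall phi, List.In phi Phi0 -> Phi phi) ->
      ~ id_entails (fun phi => List.In phi Phi0) psi.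
Proof.
exists sig_arith, Phi, psi; split; first exact: Phi_entails_psi.
exact: not_entails_finite_subset.
Qed.
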